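(* Let $S_n(t)=\sum_{\pi\in\mathfrak{S}_n(2413,3142)}t^{\mathrm{des}(\pi)}$ for $n\ge1$. For $n\geq2$, $$S_n(t)=(1+t)S_{n-1}(t)+t\sum_{j=1}^{n-2}S_j(t)\biggl(S_{n-j-1}(t)+\sum_{i=1}^{n-j-1}S_i(t)S_{n-j-i}(t)\biggr).$$ Equivalently, $S(t,z):=\sum_{n\geq1}S_n(t)z^n$ satisfies $$S(t,z)=z+(1+t)zS(t,z)+tzS^2(t,z)+tS^3(t,z).$$
   Context: $\mathfrak{S}_n(2413,3142)$ is the set of permutations of $[n]$ avoiding the patterns $2413$ and $3142$ (no subsequence has the same relative order as $2413$ or $3142$); $\mathrm{des}(\pi)=\#\{i\in[n-1]:\pi_i>\pi_{i+1}\}$. *)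

From mathcomp Require Import all_boot all_order all_algebra all_fingroup.
Set Implicit Arguments. Unset Strict Implicit. Unset Printing Implicit Defensive.
Import GRing.Theory.

(* Permutations of [n] are represented by 's : 'S_n' (permutations of {0..n-1});
   the one-line notation is s 0, s 1, ..., s (n-1). *)

Definition occurrence (n : nat) (s : 'S_n) (p : seq nat)
    (f : {ffun 'I_(size p) -> 'I_n}) : bool :=
  [forall a : 'I_(size p), forall b : 'I_(size p),
     ((a < b)%N ==> (f a < f b)%N) &&
     (((s (f a)) < (s (f b)))%N == (nth 0 p a < nth 0 p b)%N)].

Definition contains (n : nat) (s : 'S_n) (p : seq nat) : bool :=
  [exists f : {ffun 'I_(size p) -> 'I_n}, @occurrence n s p f].

Definition sep_avoid (n : nat) (s : 'S_n) : bool :=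
  ~~ contains s [:: 2; 4; 1; 3] && ~~ contains s [:: 3; 1; 4; 2].

Definition des (n : nat) (s : 'S_n) : nat :=
  #|[pred i : 'I_n | [exists j : 'I_n, (val j == (val i).+1) && (s j < s i)%N]]|.

Definition Spoly (n : nat) : {poly int} :=
  (\sum_(s : 'S_n | sep_avoid s) 'X^(des s))%R.

From mathcomp Require Import all_boot all_order all_algebra all_fingroup.
From mathcomp Require Import zify ring.
Set Implicit Arguments. Unset Strict Implicit. Unset Printing Implicit Defensive.
Import GRing.Theory.

(* The permutations avoiding 2413 and 3142 are the separable ones: of size at
   least 2, each is a direct sum or a skew sum of two smaller ones, never both,
   and the splitting is unique once its first block is indecomposable for that
   kind of sum.  Descents add up over a direct sum and gain one over a skew sum.
   With A and B the series of the sum- and skew-indecomposable permutations,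
     A = z + t B S,   B = z + A S,   S = A + B - z,
   and eliminating A and B gives S = z + (1 + t) z S + t z S^2 + t S^3, whose
   coefficient of z^n is the recurrence.  Permutations are handled through
   their one-line notation, and skew sums reduce to direct sums by complementing
   all values. *)

Definition pat2413 (a b c d : nat) := [&& c < a, a < d & d < b].
Definition pat3142 (a b c d : nat) := [&& b < d, d < a & a < c].

Definition occurs4 (P : nat -> nat -> nat -> nat -> bool) (l : seq nat) :=
  exists a b c d, subseq [:: a; b; c; d] l /\ P a b c d.

Definition separable (l : seq nat) := ~ occurs4 pat2413 l /\ ~ occurs4 pat3142 l.

Lemma occurs4_subseq P l1 l2 : subseq l1 l2 -> occurs4 P l1 -> occurs4 P l2.
Proof.
move=> sub12 [a [b [c [d [sub Pabcd]]]]]; exists a, b, c, d.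
by split; first exact: subseq_trans sub12.
Qed.

Lemma separable_subseq l1 l2 : subseq l1 l2 -> separable l2 -> separable l1.
Proof.
by move=> sub12 [no2413 no3142]; split=> /(occurs4_subseq sub12).
Qed.

Lemma occurs4_map P Q (f : nat -> nat) l :
    (forall a b c d, a \in l -> b \in l -> c \in l -> d \in l ->
       P (f a) (f b) (f c) (f d) = Q a b c d) ->
  occurs4 P (map f l) <-> occurs4 Q l.
Proof.
move=> PQ; split=> [[a [b [c [d [/subseqP[m _] Em Pabcd]]]]]|].
  have sub := mask_subseq m l; have inl := mem_subseq sub.
  move: Em Pabcd sub inl; rewrite -map_mask.
  case: (mask m l) => [|a' [|b' [|c' [|d' []]]]] //= [-> -> -> ->] Pf sub inl.
  exists a', b', c', d'; split=> //.
  by rewrite -PQ // inl // !inE eqxx ?orbT.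
case=> a [b [c [d [sub Pabcd]]]]; exists (f a), (f b), (f c), (f d).
split; first exact: (map_subseq f sub).
by rewrite PQ // (mem_subseq sub) // !inE eqxx ?orbT.
Qed.

Lemma separable_map_homo (f : nat -> nat) l :
  {in l &, {mono f : x y / x < y}} -> separable (map f l) <-> separable l.
Proof.
move=> fmono; rewrite /separable.
rewrite (@occurs4_map _ pat2413) ?(@occurs4_map _ pat3142) //.
  by move=> a b c d al bl cl dl; rewrite /pat3142 !fmono.
by move=> a b c d al bl cl dl; rewrite /pat2413 !fmono.
Qed.

(* Reversing the order of values exchanges the two forbidden patterns. *)
Lemma separable_map_anti (f : nat -> nat) l :
  {in l &, {mono f : x y / y < x >-> x < y}} -> separable (map f l) <-> separable l.
Proof.
move=> fanti; rewrite /separable.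
rewrite (@occurs4_map _ pat3142) ?(@occurs4_map _ pat2413); first by tauto.
  by move=> a b c d al bl cl dl; rewrite /pat2413 /pat3142 !fanti //; lia.
by move=> a b c d al bl cl dl; rewrite /pat2413 /pat3142 !fanti //; lia.
Qed.

Definition below (u v : seq nat) := all (fun x => all (ltn x) v) u.

Lemma belowP u v : reflect {in u & v, forall x y, x < y} (below u v).
Proof.
apply: (iffP allP) => [uv x y xu yv|uv x xu]; first exact: (allP (uv x xu)).
by apply/allP => y yv; apply: uv.
Qed.

Lemma subseq_cat_split (s u v : seq nat) : subseq s (u ++ v) ->
  exists s1 s2, [/\ s = s1 ++ s2, subseq s1 u & subseq s2 v].
Proof.
case/subseqP => m szm ->; exists (mask (take (size u) m) u), (mask (drop (size u) m) v).
rewrite -mask_cat ?cat_take_drop ?mask_subseq //.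
by rewrite size_takel // szm size_cat leq_addr.
Qed.

(* No occurrence of [P] splits into a nonempty prefix lying below the suffix. *)
Definition sum_indecomposable4 (P : nat -> nat -> nat -> nat -> bool) :=
  forall a b c d, P a b c d ->
  [/\ ~~ [&& a < b, a < c & a < d], ~~ [&& a < c, a < d, b < c & b < d]
    & ~~ [&& a < d, b < d & c < d]].

Lemma occurs4_cat P u v : sum_indecomposable4 P -> below u v ->
  occurs4 P (u ++ v) -> occurs4 P u \/ occurs4 P v.
Proof.
move=> Pind /belowP uv [a [b [c [d [/subseq_cat_split[s1 [s2 [E sub1 sub2]]] Pabcd]]]]].
have [no1 no2 no3] := Pind _ _ _ _ Pabcd.
have in1 := mem_subseq sub1; have in2 := mem_subseq sub2.
case: s1 E sub1 in1 => [|x1 [|x2 [|x3 [|x4 [|? ?]]]]] //= E sub1 in1.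
- by right; exists a, b, c, d; rewrite E.
- case: E => *; subst; case/and3P: no1.
  by split; apply: uv; rewrite ?in1 ?in2 // !inE eqxx ?orbT.
- case: E => *; subst; case/and4P: no2.
  by split; apply: uv; rewrite ?in1 ?in2 // !inE eqxx ?orbT.
- case: E => *; subst; case/and3P: no3.
  by split; apply: uv; rewrite ?in1 ?in2 // !inE eqxx ?orbT.
- by case: E => *; subst; left; exists x1, x2, x3, x4.
Qed.

Lemma sum_indecomposable4_2413 : sum_indecomposable4 pat2413.
Proof. by move=> a b c d /and3P[*]; split; apply/negP; lia. Qed.

Lemma sum_indecomposable4_3142 : sum_indecomposable4 pat3142.
Proof. by move=> a b c d /and3P[*]; split; apply/negP; lia. Qed.

Lemma leq_max_seq (l : seq nat) : {in l, forall x, x <= \max_(y <- l) y}.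
Proof. by move=> x xl; apply: (@leq_bigmax_seq _ l predT id x xl). Qed.

Definition decomposable (l : seq nat) :=
  exists u v, [/\ u != [::], v != [::], l = u ++ v & below u v \/ below v u].

Section ComplementMap.

Variable M : nat.

Lemma map_subnK l : {in l, forall x, x <= M} -> map (subn M) (map (subn M) l) = l.
Proof. by move=> lM; rewrite -map_comp map_id_in // => x /lM /= xM; lia. Qed.

Lemma separable_map_subn l :
  {in l, forall x, x <= M} -> separable (map (subn M) l) <-> separable l.
Proof. by move=> lM; apply: separable_map_anti => x y /lM + /lM; lia. Qed.

Lemma below_map_subn u v : {in u ++ v, forall x, x <= M} ->
  below v u -> below (map (subn M) u) (map (subn M) v).
Proof.
move=> uvM /belowP vu; apply/belowP => _ _ /mapP[x xu ->] /mapP[y yv ->].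
have := vu y x yv xu; have := uvM x; have := uvM y; rewrite !mem_cat xu yv orbT; lia.
Qed.

Lemma decomposable_map_subn l :
  {in l, forall x, x <= M} -> decomposable l -> decomposable (map (subn M) l).
Proof.
move=> lM [u [v [un vn El uv]]]; rewrite El in lM *.
exists (map (subn M) u), (map (subn M) v); split; rewrite ?map_cat //.
- by case: (u) un.
- by case: (v) vn.
case: uv => uv; [right|left]; apply: below_map_subn => //.
by move=> x; rewrite mem_cat orbC -mem_cat; apply: lM.
Qed.

End ComplementMap.

Lemma separable_cat u v :
  below u v \/ below v u -> separable u -> separable v -> separable (u ++ v).
Proof.
have direct u' v' : below u' v' -> separable u' -> separable v' -> separable (u' ++ v').
  move=> uv [u2413 u3142] [v2413 v3142]; split.
    by case/(occurs4_cat sum_indecomposable4_2413 uv).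
  by case/(occurs4_cat sum_indecomposable4_3142 uv).
case=> [|vu su sv]; first exact: direct.
have uvM := @leq_max_seq (u ++ v); set M := \max_(_ <- _) _ in uvM.
have uM : {in u, forall x, x <= M} by move=> x xu; rewrite uvM // mem_cat xu.
have vM : {in v, forall x, x <= M} by move=> x xv; rewrite uvM // mem_cat xv orbT.
apply/(separable_map_subn uvM); rewrite map_cat.
by apply: direct; rewrite ?separable_map_subn //; apply: below_map_subn.
Qed.

(* Inductive step of [separable_decomposable] when [u] lies below [v]: either
   [x] lies below all of [u ++ v], or [x] extends the decomposition of
   [rcons u x]; if that decomposition is the skew one, an entry of [u] below [x]
   yields an occurrence of 3142. *)
Lemma decomposable_rcons u v x :
  separable (rcons (u ++ v) x) -> x \notin u -> u != [::] -> v != [::] ->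
  below u v -> decomposable (rcons u x) -> decomposable (rcons (u ++ v) x).
Proof.
move=> [_ no3142] xu un vn /belowP uv [w [w2 [wn w2n Eux ww2]]].
have [c cu] : exists c, c \in u by case: (u) un => // c ? _; exists c; rewrite mem_head.
case: (boolP (has (ltn^~ x) u)) => [/hasP[a au /= ax]|]; last first.
  rewrite -all_predC => /allP xlu.
  have xltu y : y \in u -> x < y.
    move=> yu; have := xlu y yu; rewrite /= -leqNgt leq_eqVlt => /orP[/eqP xy|//].
    by rewrite xy yu in xu.
  exists (u ++ v), [:: x]; split; rewrite ?cats1 //; first by case: (u) un.
  right; apply/belowP => _ y /[!inE] /eqP-> /[!mem_cat] /orP[/xltu//|yv].
  exact: ltn_trans (xltu c cu) (uv c y cu yv).
case/lastP: w2 w2n Eux ww2 => [|w'' x'] // _; rewrite -rcons_cat => /rcons_inj[Eu <-].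
have [b bv] : exists b, b \in v by case: (v) vn => // b ? _; exists b; rewrite mem_head.
subst u; case=> /belowP ww2.
  exists w, (w'' ++ v ++ [:: x]); split; rewrite -?cats1 -?catA //.
    by case: (w'') => //; case: (v) vn.
  left; apply/belowP => y z yw; rewrite !mem_cat => /or3P[zw''|zv|zx].
  - by apply: ww2; rewrite // mem_rcons inE zw'' orbT.
  - by apply: uv; rewrite // mem_cat yw.
  - by move: zx; rewrite inE => /eqP->; apply: ww2; rewrite // mem_rcons mem_head.
have [c' c'w] : exists c', c' \in w by case: (w) wn => // c' ? _; exists c'; rewrite mem_head.
exfalso; apply: no3142.
have aw'' : a \in w''.
  move: au; rewrite mem_cat => /orP[aw|//].
  by have := ww2 x a; rewrite mem_rcons mem_head aw => /(_ isT isT); lia.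
exists c', a, b, x; split.
  rewrite -cats1 -!catA.
  apply: (cat_subseq (s1 := [:: c'])); first by rewrite sub1seq.
  apply: (cat_subseq (s1 := [:: a])); first by rewrite sub1seq.
  by apply: (cat_subseq (s1 := [:: b])); rewrite sub1seq ?mem_head.
apply/and3P; split=> //.
  by apply: ww2; rewrite ?mem_rcons ?mem_head.
by apply: uv; rewrite // mem_cat c'w.
Qed.

Lemma separable_decomposable l :
  uniq l -> 1 < size l -> separable l -> decomposable l.
Proof.
have [n] := ubnP (size l); elim: n l => // n IH l.
case/lastP: l => [|l' x] //; rewrite size_rcons !ltnS rcons_uniq => szl /andP[xl' ul'] l'0 sl.
case: (ltnP 1 (size l')) => [l'1|]; last first.
  case: l' l'0 xl' {szl ul' sl} => [|y [|? ?]] //= _; rewrite inE => xy _.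
  exists [:: y], [:: x]; split=> //; rewrite /below /= !andbT.
  by case: (ltngtP y x) => yx; [left|right|rewrite yx eqxx in xy].
have [u [v [un vn El' uv]]] := IH l' szl ul' l'1 (separable_subseq (subseq_rcons l' x) sl).
have szuv : size u < size l' by rewrite El' size_cat -subn_gt0 addKn lt0n size_eq0.
have subux : subseq (rcons u x) (rcons l' x).
  by rewrite El' -!cats1 -catA cat_subseq ?suffix_subseq.
have IHu : decomposable (rcons u x).
  apply: IH.
  - by rewrite size_rcons; lia.
  - by apply: subseq_uniq subux _; rewrite rcons_uniq xl'.
  - by rewrite size_rcons ltnS lt0n size_eq0.
  - exact: separable_subseq subux sl.
have xu : x \notin u by apply: contra xl'; rewrite El' mem_cat => ->.
rewrite El' in sl *; case: uv => uv; first exact: decomposable_rcons.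
(* The skew case reduces to the direct one by complementing all values. *)
have lM := @leq_max_seq (rcons (u ++ v) x); set M := \max_(_ <- _) _ in lM.
rewrite -(map_subnK lM); apply: decomposable_map_subn.
  by move=> _ /mapP[y _ ->]; apply: leq_subr.
rewrite map_rcons map_cat; apply: decomposable_rcons.
- by rewrite -map_cat -map_rcons separable_map_subn.
- apply: contra xu => /mapP[y yu Exy].
  have /lM xM : x \in rcons (u ++ v) x by rewrite mem_rcons mem_head.
  have /lM yM : y \in rcons (u ++ v) x by rewrite mem_rcons inE mem_cat yu orbT.
  by have -> : x = y by lia.
- by case: (u) un.
- by case: (v) vn.
- by apply: below_map_subn => // y yuv; apply: lM; rewrite mem_rcons inE yuv orbT.
rewrite -map_rcons; apply: decomposable_map_subn => // y yux; apply: lM.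
by move: yux; rewrite !mem_rcons !inE mem_cat => /orP[->|->]; rewrite ?orbT.
Qed.

Lemma sorted_subseq_iota m n (ix : seq nat) : sorted ltn ix ->
  {in ix, forall i, m <= i < m + n} -> subseq ix (iota m n).
Proof.
move=> ix_sorted ix_range.
rewrite (@irr_sorted_eq _ ltn ltn_trans ltnn ix (filter (mem ix) (iota m n))) //.
- exact: filter_subseq.
- by apply: sorted_filter; [exact: ltn_trans | exact: iota_ltn_sorted].
by move=> i; rewrite mem_filter mem_iota andb_idr // => /ix_range.
Qed.

Lemma subseq4P (l : seq nat) a b c d :
  subseq [:: a; b; c; d] l <->
  exists i j k m, [/\ i < j < k, k < m < size l &
     [/\ a = nth 0 l i, b = nth 0 l j, c = nth 0 l k & d = nth 0 l m]].
Proof.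
have El : l = map (nth 0 l) (iota 0 (size l)) by rewrite map_nth_iota0 // take_size.
split=> [/subseqP[mk _ E]|[i [j [k [m [/andP[ij jk] /andP[km ml] [-> -> -> ->]]]]]]].
  have sub := mask_subseq mk (iota 0 (size l)).
  move: E sub; rewrite {1}El -map_mask.
  case: (mask _ _) => [|i [|j [|k [|m [|? ?]]]]] //= [-> -> -> ->] sub.
  have /= /and4P[ij jk km _] := subseq_sorted ltn_trans sub (iota_ltn_sorted 0 (size l)).
  have := @mem_subseq _ _ _ sub m; rewrite !inE eqxx !orbT mem_iota => /(_ isT) ml.
  by exists i, j, k, m; rewrite ij jk km.
rewrite [X in subseq _ X]El (map_subseq _ (s1 := [:: i; j; k; m])) //.
by apply: sorted_subseq_iota => [|x]; rewrite /= ?ij ?jk ?km // !inE; lia.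
Qed.

Definition oneline n (s : 'S_n) : seq nat := [seq val (s i) | i <- enum 'I_n].

Lemma size_oneline n (s : 'S_n) : size (oneline s) = n.
Proof. by rewrite size_map size_enum_ord. Qed.

Lemma nth_oneline n (s : 'S_n) (i : 'I_n) : nth 0 (oneline s) i = s i.
Proof. by rewrite (nth_map i) ?size_enum_ord // nth_ord_enum. Qed.

Lemma oneline_inj n : injective (@oneline n).
Proof.
move=> s1 s2 E; apply/permP => i; apply: ord_inj.
by rewrite -!nth_oneline E.
Qed.

Lemma perm_oneline n (s : 'S_n) : perm_eq (oneline s) (iota 0 n).
Proof.
apply: uniq_perm; rewrite ?iota_uniq //.
  by rewrite map_inj_uniq ?enum_uniq // => i j /val_inj; apply: perm_inj.
move=> x; rewrite mem_iota /=; apply/mapP/idP => [[i _ ->]|xn]; first exact: ltn_ord.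
by exists ((s^-1)%g (Ordinal xn)); rewrite ?mem_enum // permKV.
Qed.

Lemma oneline_surj n l : perm_eq l (iota 0 n) -> exists s : 'S_n, oneline s = l.
Proof.
move=> pl; have sz : size l = n by rewrite (perm_size pl) size_iota.
have lt (i : 'I_n) : nth 0 l i < n.
  by have := mem_nth 0 (_ : i < size l); rewrite (perm_mem pl) mem_iota sz => /(_ (ltn_ord i)).
pose g i := Ordinal (lt i).
have ginj : injective g.
  move=> i j /(congr1 val) /= /eqP; rewrite nth_uniq ?sz ?(perm_uniq pl) ?iota_uniq //.
  by move/eqP/val_inj.
exists (perm ginj); apply: (@eq_from_nth _ 0); rewrite ?size_oneline ?sz // => i ltin.
by rewrite -[i]/(val (Ordinal ltin)) nth_oneline permE.
Qed.

Definition same_order4 (p : seq nat) (a b c d : nat) :=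
  [forall x : 'I_4, forall y : 'I_4,
     (nth 0 [:: a; b; c; d] x < nth 0 [:: a; b; c; d] y) == (nth 0 p x < nth 0 p y)].

Local Notation ord4 i := (@Ordinal 4 i isT).

Lemma nth_ord4 (g : 'I_4 -> nat) (x : 'I_4) :
  nth 0 [:: g (ord4 0); g (ord4 1); g (ord4 2); g (ord4 3)] x = g x.
Proof. by case: x => -[|[|[|[|x]]]] x4 //=; congr g; apply: val_inj. Qed.

Lemma contains4P n (s : 'S_n) p0 p1 p2 p3 P :
    (forall a b c d, same_order4 [:: p0; p1; p2; p3] a b c d = P a b c d) ->
  contains s [:: p0; p1; p2; p3] <-> occurs4 P (oneline s).
Proof.
move=> PE; split=> [/existsP[f /forallP occ]|[a [b [c [d [/subseq4P occ ord_abcd]]]]]].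
  set p := [:: p0; p1; p2; p3] in occ PE *.
  have [incr ord] : (forall x y : 'I_4, x < y -> f x < f y) /\
    (forall x y : 'I_4, (s (f x) < s (f y)) = (nth 0 p x < nth 0 p y)).
    by split=> x y; have /andP[/implyP incr /eqP ord] := forallP (occ x) y.
  pose g x := val (s (f x)).
  exists (g (ord4 0)), (g (ord4 1)), (g (ord4 2)), (g (ord4 3)); split.
    apply/subseq4P; exists (f (ord4 0)), (f (ord4 1)), (f (ord4 2)), (f (ord4 3)).
    by rewrite !incr // size_oneline ltn_ord !nth_oneline.
  by rewrite -PE; apply/forallP => x; apply/forallP => y; rewrite !nth_ord4 ord.
rewrite -PE in ord_abcd; case: occ => [i [j [k [m [/andP[ij jk] /andP[km]]]]]].
rewrite size_oneline => mn [Ea Eb Ec Ed].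
have [in_ jn kn] : [/\ i < n, j < n & k < n] by split; lia.
pose f := [ffun x : 'I_4 =>
  nth (Ordinal in_) [:: Ordinal in_; Ordinal jn; Ordinal kn; Ordinal mn] x].
have fE x : val (s (f x)) = nth 0 [:: a; b; c; d] x.
  rewrite ffunE Ea Eb Ec Ed.
  by case: x => -[|[|[|[|x]]]] x4 //=; rewrite -nth_oneline.
apply/existsP; exists f; apply/forallP => x; apply/forallP => y.
rewrite !fE (forallP (forallP ord_abcd x) y) andbT !ffunE.
by case: x => -[|[|[|[|x]]]] x4 //; case: y => -[|[|[|[|y]]]] y4 //=; lia.
Qed.

Lemma same_order4_2413 a b c d : same_order4 [:: 2; 4; 1; 3] a b c d = pat2413 a b c d.
Proof.
apply/forallP/and3P => [ord|[ca ad db] x]; last first.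
  by apply/forallP; case: x => -[|[|[|[|x]]]] x4 //; case=> -[|[|[|[|y]]]] y4 //=; lia.
have o x y := eqP (forallP (ord x) y).
have := o (ord4 2) (ord4 0).
have := o (ord4 0) (ord4 3).
by have := o (ord4 3) (ord4 1) => /= -> -> ->.
Qed.

Lemma same_order4_3142 a b c d : same_order4 [:: 3; 1; 4; 2] a b c d = pat3142 a b c d.
Proof.
apply/forallP/and3P => [ord|[bd da ac] x]; last first.
  by apply/forallP; case: x => -[|[|[|[|x]]]] x4 //; case=> -[|[|[|[|y]]]] y4 //=; lia.
have o x y := eqP (forallP (ord x) y).
have := o (ord4 1) (ord4 3).
have := o (ord4 3) (ord4 0).
by have := o (ord4 0) (ord4 2) => /= -> -> ->.
Qed.

Lemma sep_avoidE n (s : 'S_n) : sep_avoid s <-> separable (oneline s).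
Proof.
rewrite /sep_avoid /separable -(contains4P _ same_order4_2413) -(contains4P _ same_order4_3142).
by split=> [/andP[/negP ? /negP ?] | [/negP -> /negP ->]].
Qed.

Fixpoint descents (l : seq nat) : nat :=
  if l is x :: r then (if r is y :: _ then y < x else false) + descents r else 0.

Lemma descents_count l :
  descents l = count (fun i => nth 0 l i.+1 < nth 0 l i) (iota 0 (size l).-1).
Proof.
elim: l => [|x [|y r] IH] //.
rewrite -[descents _]/((y < x) + descents (y :: r)) {}IH /=.
by rewrite -[iota 1 _]/(iota (1 + 0) _) iotaDl count_map.
Qed.

Lemma des_oneline n (s : 'S_n) : des s = descents (oneline s).
Proof.
rewrite /des cardE /enum_mem size_filter -enumT descents_count size_oneline.
transitivity (count (fun i => (i.+1 < n) && (nth 0 (oneline s) i.+1 < nth 0 (oneline s) i))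
                    (iota 0 n)).
  rewrite -val_enum_ord count_map; apply: eq_count => i /=.
  apply/existsP/andP => [[j /andP[/eqP Ej lt]]|[lt1 lt2]].
    by rewrite -Ej ltn_ord !nth_oneline.
  by exists (Ordinal lt1); rewrite eqxx -[i.+1]/(val (Ordinal lt1)) -!nth_oneline.
case: n s => [|n] s //; set L := oneline s.
have -> : iota 0 n.+1 = iota 0 n ++ [:: n] by rewrite -addn1 iotaD.
rewrite count_cat /= ltnn /= !addn0; apply: eq_in_count => i.
by rewrite mem_iota ltnS => /andP[_ ->].
Qed.

Lemma descents_cat u v : descents (u ++ v) =
  descents u + descents v + [&& u != [::], v != [::] & head 0 v < last 0 u].
Proof.
elim: u => [|x u IH] /=; first by rewrite addn0.
rewrite {}IH; case: u => [|y u] /=; first by case: v => [|z v] /=; lia.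
by rewrite !addnA.
Qed.

Lemma descents_map_homo (f : nat -> nat) l :
  {in l &, {mono f : x y / x < y}} -> descents (map f l) = descents l.
Proof.
elim: l => [|x [|y r] IH] fmono //=; rewrite fmono ?inE ?eqxx ?orbT //.
by congr (_ + _); apply: IH => a b ar br; apply: fmono; rewrite inE ?ar ?br orbT.
Qed.

Definition sep_perms n : seq (seq nat) :=
  map (@oneline n) (enum [pred s : 'S_n | sep_avoid s]).

Lemma sep_perms_uniq n : uniq (sep_perms n).
Proof. by rewrite map_inj_uniq ?enum_uniq //; apply: oneline_inj. Qed.

Lemma mem_sep_perms n (l : seq nat) : l \in sep_perms n <-> perm_eq l (iota 0 n) /\ separable l.
Proof.
split=> [/mapP[s] | [pl sl]].
  by rewrite mem_enum inE => /sep_avoidE sl ->; split=> //; apply: perm_oneline.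
have [s Es] := oneline_surj pl.
by apply/mapP; exists s; rewrite // mem_enum inE sep_avoidE Es.
Qed.

Lemma sep_permsP n (l : seq nat) : l \in sep_perms n ->
  [/\ size l = n, uniq l, forall x, (x \in l) = (x < n) & separable l].
Proof.
case/mem_sep_perms => pl sl; split=> //.
- by rewrite (perm_size pl) size_iota.
- by rewrite (perm_uniq pl) iota_uniq.
- by move=> x; rewrite (perm_mem pl) mem_iota.
Qed.

Lemma sep_perms1 : perm_eq (sep_perms 1) [:: [:: 0]].
Proof.
apply: uniq_perm; rewrite ?sep_perms_uniq // => l; rewrite inE.
apply/idP/eqP => [/mem_sep_perms[/perm_small_eq -> //]|->].
apply/mem_sep_perms; split=> //.
by split=> -[a [b [c [d [/size_subseq]]]]].
Qed.

Definition Sdes (P : pred (seq nat)) k : {poly int} :=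
  (\sum_(l <- sep_perms k | P l) 'X^(descents l))%R.

Lemma Spoly_Sdes n : Spoly n = Sdes predT n.
Proof.
rewrite /Spoly /Sdes /sep_perms big_map big_enum_cond /=.
by apply: eq_big => [s|s _]; rewrite ?inE ?andbT ?des_oneline.
Qed.

Definition lower_prefix (l : seq nat) k := all (gtn k) (take k l).

Definition sum_decomposable (l : seq nat) := has (lower_prefix l) (iota 1 (size l).-1).

Definition compl (l : seq nat) := map (subn (size l).-1) l.

Definition skew_decomposable (l : seq nat) := sum_decomposable (compl l).

Lemma lower_prefix_iota l k :
  uniq l -> k <= size l -> lower_prefix l k -> take k l =i iota 0 k.
Proof.
move=> ul kl /allP lt_k.
have sub : {subset take k l <= iota 0 k} by move=> x /lt_k; rewrite mem_iota.
have szk : size (iota 0 k) <= size (take k l) by rewrite size_iota size_takel.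
by have [] := uniq_min_size (take_uniq k ul) sub szk.
Qed.

Section SepPerms.

Variable n : nat.
Implicit Types l s t u v : seq nat.

Lemma size_compl l : size (compl l) = size l.
Proof. exact: size_map. Qed.

Lemma compl_sep_perms l : l \in sep_perms n -> compl l \in sep_perms n.
Proof.
case/sep_permsP=> szl ul lE sl; rewrite /compl szl; apply/mem_sep_perms; split; last first.
  by apply/separable_map_subn => // x; rewrite lE; lia.
apply: uniq_perm; rewrite ?iota_uniq //.
  by rewrite map_inj_in_uniq // => x y; rewrite !lE; lia.
move=> y; rewrite mem_iota /=; apply/mapP/idP => [[x xl ->]|yn].
  by move: xl; rewrite lE; lia.
by exists (n.-1 - y); rewrite ?lE; lia.
Qed.

Lemma complK l : l \in sep_perms n -> compl (compl l) = l.
Proof.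
case/sep_permsP=> szl _ lE _; rewrite /compl size_map map_subnK // => x.
by rewrite lE szl; lia.
Qed.

Lemma big_compl (R : nmodType) (P : pred (seq nat)) (G : seq nat -> R) :
  (\sum_(l <- sep_perms n | P l) G l =
   \sum_(l <- sep_perms n | P (compl l)) G (compl l))%R.
Proof.
rewrite -(big_map compl P G); apply: perm_big; apply: uniq_perm.
- exact: sep_perms_uniq.
- by rewrite map_inj_in_uniq ?sep_perms_uniq // => l1 l2 /complK {2}<- /complK {2}<- ->.
move=> l; apply/idP/mapP => [lW|[l' l'W ->]]; last exact: compl_sep_perms.
by exists (compl l); rewrite ?compl_sep_perms ?complK.
Qed.

Lemma sum_decomposable_cat u v : u ++ v \in sep_perms n ->
  u != [::] -> v != [::] -> below u v -> sum_decomposable (u ++ v).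
Proof.
case/sep_permsP=> szl _ lE _ un vn /belowP uv; apply/hasP; exists (size u).
  move: un vn; rewrite mem_iota size_cat -!size_eq0 -!lt0n => su sv.
  by rewrite su add1n prednK ?addn_gt0 ?su //= -[X in X < _]addn0 ltn_add2l.
rewrite /lower_prefix (take_size_cat v (erefl (size u))); apply/allP => x xu /=.
have sub : {subset iota 0 x.+1 <= u}.
  move=> y; rewrite mem_iota /= => yx.
  have : y \in u ++ v by rewrite lE; have := lE x; rewrite mem_cat xu /=; lia.
  by rewrite mem_cat => /orP[//|yv]; have := uv x y xu yv; lia.
by have := uniq_leq_size (iota_uniq 0 x.+1) sub; rewrite size_iota.
Qed.

Lemma sum_or_skew_decomposable l : l \in sep_perms n -> 1 < n ->
  sum_decomposable l || skew_decomposable l.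
Proof.
move=> lW n1; have [szl ul lE sl] := sep_permsP lW.
have [|u [v [un vn El [uv|vu]]]] := separable_decomposable ul _ sl; first by rewrite szl.
  by rewrite El sum_decomposable_cat // -El.
apply/orP; right; rewrite /skew_decomposable /compl El map_cat sum_decomposable_cat //.
- by rewrite -map_cat -El compl_sep_perms.
- by case: (u) un.
- by case: (v) vn.
by apply: below_map_subn => // x; rewrite -El lE szl; lia.
Qed.

Lemma sum_skew_decomposable_excl l : l \in sep_perms n ->
  ~~ (sum_decomposable l && skew_decomposable l).
Proof.
move=> lW; have [szl ul lE _] := sep_permsP lW.
have [_ uc _ _] := sep_permsP (compl_sep_perms lW).
apply/andP => -[/hasP[k /[!mem_iota] /andP[k0 kn] lk] /hasP[k' /[!mem_iota] /andP[k'0 k'n] ck']].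
rewrite size_compl szl in k'n; rewrite szl in kn.
have low x : (x \in take k l) = (x < k).
  by rewrite (lower_prefix_iota ul _ lk) ?mem_iota ?szl //; lia.
have high y : (y \in take k' (compl l)) = (y < k').
  by rewrite (lower_prefix_iota uc _ ck') ?mem_iota ?size_compl ?szl //; lia.
have complE : take k' (compl l) = map (subn n.-1) (take k' l) by rewrite /compl szl map_take.
case: (leqP k k') => kk'.
  have /mem_take l0 : 0 \in take k (take k' l) by rewrite take_takel // low; lia.
  by have := high (n.-1 - 0); rewrite complE (map_f (subn n.-1) l0); lia.
have : 0 \in take k' (compl l) by rewrite high; lia.
rewrite complE => /mapP[y yl' y0].
have yn : y < n by rewrite -lE (mem_take yl').
have : y \in take k' (take k l) by rewrite (take_takel _ (ltnW kk')).
by move/mem_take; rewrite low; lia.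
Qed.

Lemma skew_decomposableE l : l \in sep_perms n -> 1 < n ->
  skew_decomposable l = ~~ sum_decomposable l.
Proof.
move=> lW n1; have := sum_or_skew_decomposable lW n1.
by have := sum_skew_decomposable_excl lW; case: sum_decomposable; case: skew_decomposable.
Qed.

End SepPerms.

Definition first_block (l : seq nat) k := lower_prefix l k && ~~ sum_decomposable (take k l).

Definition direct_sum k (s t : seq nat) := s ++ map (addn k) t.

Definition skew_sum m (s t : seq nat) := map (addn m) s ++ t.

Lemma mem_iota1 k n : (k \in iota 1 n.-1) = (0 < k < n).
Proof. by rewrite mem_iota; case: n => [|n] /=; lia. Qed.

Lemma direct_sum_sep_perms k m (s t : seq nat) :
  s \in sep_perms k -> t \in sep_perms m -> direct_sum k s t \in sep_perms (k + m).
Proof.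
move=> sW tW; have [_ _ sE _] := sep_permsP sW.
case/mem_sep_perms: sW => ps ss; case/mem_sep_perms: tW => pt st.
apply/mem_sep_perms; split.
  rewrite iotaD add0n.
  have -> : iota k m = map (addn k) (iota 0 m) by rewrite -iotaDl addn0.
  by rewrite perm_cat // perm_map.
apply: separable_cat => //; last by apply/separable_map_homo => // x y _ _; rewrite ltn_add2l.
by left; apply/belowP => x _ xs /mapP[y _ ->]; rewrite sE in xs; apply: leq_trans xs (leq_addr _ _).
Qed.

Lemma first_block_direct_sum k m (s t : seq nat) : s \in sep_perms k -> t \in sep_perms m ->
  ~~ sum_decomposable s -> first_block (direct_sum k s t) k.
Proof.
move=> sW _ sind; have [szs _ sE _] := sep_permsP sW.
rewrite /first_block /lower_prefix /direct_sum take_size_cat // sind andbT.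
by apply/allP => x; rewrite sE.
Qed.

Lemma direct_sum_take_drop n k (l : seq nat) : l \in sep_perms n -> k <= n -> lower_prefix l k ->
  let t := map (subn^~ k) (drop k l) in
  [/\ take k l \in sep_perms k, t \in sep_perms (n - k) & l = direct_sum k (take k l) t].
Proof.
move=> lW kn lk t; have [szl ul lE sl] := sep_permsP lW.
have low : take k l =i iota 0 k by apply: lower_prefix_iota; rewrite ?szl.
have dk x : x \in drop k l -> k <= x < n.
  move=> xd; have xt : x \notin take k l.
    by move: ul; rewrite -{1}(cat_take_drop k l) cat_uniq => /and3P[_ /hasPn/(_ x xd)].
  have xn : x < n by rewrite -lE (mem_drop xd).
  by move: xt; rewrite low mem_iota /= xn; lia.
have tE : map (addn k) t = drop k l.
  by rewrite /t -map_comp map_id_in // => x /dk /= ?; lia.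
split; last by rewrite /direct_sum tE cat_take_drop.
  apply/mem_sep_perms; split; last exact: separable_subseq (take_subseq _ _) sl.
  by apply: uniq_perm; rewrite ?take_uniq ?iota_uniq.
apply/mem_sep_perms; split; last first.
  rewrite -(separable_map_homo (f := addn k)) ?tE; last by move=> x y _ _; rewrite ltn_add2l.
  exact: separable_subseq (drop_subseq _ _) sl.
apply: uniq_perm; rewrite ?iota_uniq //.
  by rewrite map_inj_in_uniq ?drop_uniq // => x y /dk ? /dk ?; lia.
move=> y; rewrite mem_iota /=; apply/mapP/idP => [[x /dk ? ->]|yn]; first by lia.
exists (y + k); last by rewrite addnK.
have : y + k \in l by rewrite lE; lia.
by rewrite -{1}(cat_take_drop k l) mem_cat low mem_iota /= => /orP[|//]; lia.
Qed.

Lemma first_block_unique n (l : seq nat) k1 k2 : l \in sep_perms n -> 0 < k1 < n -> 0 < k2 < n ->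
  first_block l k1 -> first_block l k2 -> k1 = k2.
Proof.
move=> lW; have [szl _ _ _] := sep_permsP lW.
wlog k12 : k1 k2 / k1 < k2.
  move=> wlog k1n k2n bl1 bl2.
  by case: (ltngtP k1 k2) => [k12|k21|//]; [apply: wlog | symmetry; apply: wlog].
move=> /andP[k1_0 _] /andP[_ k2n] /andP[l1 _] /andP[_]; case/hasP; exists k1.
  by rewrite mem_iota1 size_takel ?szl ?(ltnW k2n) // k1_0.
by rewrite /lower_prefix take_takel ?(ltnW k12).
Qed.

Lemma first_block_exists n (l : seq nat) : l \in sep_perms n -> sum_decomposable l ->
  exists2 k, 0 < k < n & first_block l k.
Proof.
move=> lW ldec; have [szl _ _ _] := sep_permsP lW.
have exk : exists k, (0 < k < n) && lower_prefix l k.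
  by case/hasP: ldec => k; rewrite mem_iota1 szl => kn lk; exists k; rewrite kn.
case: (ex_minnP exk) => k /andP[kn lk] kmin; exists k; rewrite // /first_block lk /=.
apply/hasP => -[k' /[!mem_iota1] /andP[k'0 k'k] lk'].
have kn' : k <= n by case/andP: kn => _ /ltnW.
rewrite size_takel ?szl // in k'k.
have := kmin k'; rewrite k'0 /= (ltn_trans k'k) ?(proj2 (andP kn)) //.
move: lk'; rewrite /lower_prefix take_takel ?(ltnW k'k) // => -> /(_ isT).
by rewrite leqNgt k'k.
Qed.

Lemma perm_first_block n k : 0 < k < n ->
  perm_eq [seq l <- sep_perms n | first_block l k]
          [seq direct_sum k s t | s <- [seq s <- sep_perms k | ~~ sum_decomposable s],
                            t <- sep_perms (n - k)].
Proof.
move=> /andP[k0 kn]; have kn' : k <= n := ltnW kn.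
apply: uniq_perm; first exact: filter_uniq (sep_perms_uniq n).
  apply: allpairs_uniq; rewrite ?filter_uniq ?sep_perms_uniq //.
  move=> [s1 t1] [s2 t2] /allpairsP[[s1' t1'] /= [/[!mem_filter] /andP[_ s1W] _ [-> ->]]].
  move=> /allpairsP[[s2' t2'] /= [/[!mem_filter] /andP[_ s2W] _ [-> ->]]] /= E.
  have [sz1 _ _ _] := sep_permsP s1W; have [sz2 _ _ _] := sep_permsP s2W.
  have := congr1 (take k) E; have := congr1 (drop k) E.
  rewrite /direct_sum !take_size_cat ?drop_size_cat // => /(inj_map (@addnI k)) -> ->.
  by [].
move=> l; rewrite mem_filter; apply/andP/allpairsP => [[/andP[lk lind] lW]|].
  have [sW tW El] := direct_sum_take_drop lW kn' lk.
  by exists (take k l, map (subn^~ k) (drop k l)); rewrite /= mem_filter lind sW.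
move=> [[s t] /= [/[!mem_filter] /andP[sind sW] tW ->]].
split; first exact: first_block_direct_sum sW tW sind.
by rewrite -(subnKC kn'); apply: direct_sum_sep_perms.
Qed.

Lemma descents_direct_sum k (s t : seq nat) : s \in sep_perms k ->
  descents (direct_sum k s t) = descents s + descents t.
Proof.
case/sep_permsP=> _ _ sE _.
rewrite /direct_sum descents_cat descents_map_homo => [|x y _ _]; last by rewrite ltn_add2l.
suff -> : [&& s != [::], map (addn k) t != [::] & head 0 (map (addn k) t) < last 0 s] = false.
  by rewrite addn0.
case: s sE => [|x s] // sE; case: t => [|y t] //=.
by rewrite ltnNge (leq_trans _ (leq_addr y k)) // ltnW // -sE mem_last.
Qed.

Lemma descents_skew_sum m (s t : seq nat) : t \in sep_perms m -> s != [::] -> t != [::] ->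
  descents (skew_sum m s t) = (descents s + descents t).+1.
Proof.
case/sep_permsP=> _ _ tE _ sn tn.
rewrite /skew_sum descents_cat descents_map_homo => [|x y _ _]; last by rewrite ltn_add2l.
suff -> : [&& map (addn m) s != [::], t != [::] & head 0 t < last 0 (map (addn m) s)].
  by rewrite addn1.
case: s sn => [|x s] // _; case: t tn tE => [|y t] // _ tE.
by rewrite /= last_map (leq_trans _ (leq_addr _ _)) // -tE mem_head.
Qed.

Local Open Scope ring_scope.

Lemma big_partition_seq (R : nmodType) (T I : eqType) (r : seq T) (ks : seq I)
    (P : pred T) (Q : I -> pred T) (F : T -> R) :
    uniq ks ->
    (forall x, x \in r -> P x -> exists2 k, k \in ks & Q k x) ->
    (forall x k1 k2, x \in r -> k1 \in ks -> k2 \in ks -> Q k1 x -> Q k2 x -> k1 = k2) ->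
    (forall x k, x \in r -> k \in ks -> Q k x -> P x) ->
  \sum_(x <- r | P x) F x = \sum_(k <- ks) \sum_(x <- r | Q k x) F x.
Proof.
move=> uks ex un QP.
under [RHS]eq_bigr do rewrite big_mkcond.
rewrite exchange_big /= big_mkcond /= big_seq [RHS]big_seq; apply: eq_bigr => x xr.
case: (boolP (P x)) => [Px | nPx]; last first.
  rewrite big_seq big1 // => k kks; case: ifP => // /(QP x k xr kks).
  by rewrite (negbTE nPx).
have [k0 k0ks Qk0] := ex x xr Px.
rewrite -big_mkcond -big_filter (_ : filter (Q^~ x) ks = [:: k0]) ?big_seq1 //.
rewrite -(filter_pred1_uniq uks k0ks); apply: eq_in_filter => k kks.
by apply/idP/eqP => [Qkx|->//]; apply: un xr kks k0ks Qkx Qk0.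
Qed.

Lemma big_sum_decomposable (R : nmodType) n (G : seq nat -> R) :
  \sum_(l <- sep_perms n | sum_decomposable l) G l =
  \sum_(1 <= k < n) \sum_(s <- sep_perms k | ~~ sum_decomposable s)
                       \sum_(t <- sep_perms (n - k)) G (direct_sum k s t).
Proof.
rewrite (@big_partition_seq _ _ _ _ (index_iota 1 n) _ (fun k l => first_block l k)).
- rewrite big_seq [RHS]big_seq; apply: eq_bigr => k /[!mem_index_iota] kn.
  by rewrite -big_filter (perm_big _ (perm_first_block kn)) big_allpairs_dep big_filter.
- exact: iota_uniq.
- move=> l lW ldec; have [k kn lk] := first_block_exists lW ldec.
  by exists k; rewrite ?mem_index_iota.
- by move=> l k1 k2 lW /[!mem_index_iota] k1n k2n; apply: first_block_unique lW k1n k2n.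
move=> l k lW /[!mem_index_iota] kn /andP[lk _]; apply/hasP; exists k => //.
by have [-> _ _ _] := sep_permsP lW; rewrite mem_iota1.
Qed.

Lemma compl_direct_sum n k (s t : seq nat) : (k <= n)%N ->
  s \in sep_perms k -> t \in sep_perms (n - k) ->
  compl (direct_sum k s t) = skew_sum (n - k) (compl s) (compl t).
Proof.
move=> kn sW tW; have [szs _ sE _] := sep_permsP sW; have [szt _ tE _] := sep_permsP tW.
rewrite /compl /direct_sum /skew_sum size_cat size_map szs szt subnKC // map_cat -!map_comp.
congr (_ ++ _); apply/eq_in_map => x /=; [rewrite sE | rewrite tE]; lia.
Qed.

Lemma big_skew_decomposable (R : nmodType) n (G : seq nat -> R) :
  \sum_(l <- sep_perms n | skew_decomposable l) G l =
  \sum_(1 <= k < n) \sum_(s <- sep_perms k | ~~ skew_decomposable s)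
                       \sum_(t <- sep_perms (n - k)) G (skew_sum (n - k) s t).
Proof.
transitivity (\sum_(l <- sep_perms n | sum_decomposable l) G (compl l)).
  rewrite big_compl big_seq_cond [RHS]big_seq_cond; apply: eq_bigl => l.
  by case: (boolP (l \in _)) => //= lW; rewrite /skew_decomposable (complK lW).
rewrite big_sum_decomposable big_seq [RHS]big_seq.
apply: eq_bigr => k /[!mem_index_iota] /andP[_ /ltnW kn].
rewrite (big_compl _ (fun s => ~~ skew_decomposable s)) big_seq_cond [RHS]big_seq_cond.
apply: eq_big => [s | s /andP[sW _]].
  by case: (boolP (s \in _)) => //= sW; rewrite /skew_decomposable (complK sW).
rewrite (big_compl _ predT); apply: eq_big_seq => t tW.
by rewrite (compl_direct_sum kn sW (compl_sep_perms tW)) (complK tW).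
Qed.

Section TruncatedSeries.

Variable R : comNzRingType.
Implicit Types (f g : nat -> R) (p q : {poly R}).

(* The constant term is dropped: [S(t, z)] starts at [z], whereas [Spoly 0 = 1]. *)
Definition series f N : {poly R} := \poly_(i < N.+1) (if i == 0%N then 0 else f i).

Definition vanishes_to N p := forall i, (i <= N)%N -> p`_i = 0.

Lemma coef_series f N i : (i <= N)%N -> (series f N)`_i = if i == 0%N then 0 else f i.
Proof. by move=> iN; rewrite coef_poly ltnS iN. Qed.

Lemma big_ord_conv f g i : f 0%N = 0 -> g 0%N = 0 ->
  \sum_(j < i.+1) f j * g (i - j)%N = \sum_(1 <= k < i) f k * g (i - k)%N.
Proof.
move=> f0 g0; case: i => [|i]; first by rewrite big_ord1 f0 mul0r big_geq.
rewrite big_ord_recl f0 mul0r add0r big_ord_recr /= subnn g0 mulr0 addr0.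
by rewrite big_add1 /= big_mkord; apply: eq_bigr => j _.
Qed.

Lemma coef_seriesM f N q i : (i <= N)%N -> q`_0 = 0 ->
  (series f N * q)`_i = \sum_(1 <= k < i) f k * q`_(i - k).
Proof.
move=> iN q0; rewrite coefM.
have cf (j : 'I_i.+1) : (series f N)`_j = if nat_of_ord j == 0%N then 0 else f j.
  by rewrite coef_series // -ltnS (leq_trans (ltn_ord j)).
under eq_bigr => j _ do rewrite cf.
rewrite (@big_ord_conv (fun j => if j == 0%N then 0 else f j) (fun j => q`_j)) //.
by apply: eq_big_nat => -[].
Qed.

Lemma coef_series_mul f g N i : (i <= N)%N ->
  (series f N * series g N)`_i = \sum_(1 <= k < i) f k * g (i - k)%N.
Proof.
move=> iN; rewrite coef_seriesM ?coef_series //; apply: eq_big_nat => k /andP[k0 ki].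
rewrite coef_series; last exact: leq_trans (leq_subr _ _) iN.
by rewrite subn_eq0 leqNgt ki.
Qed.

Lemma vanishes_toD N p q : vanishes_to N p -> vanishes_to N q -> vanishes_to N (p + q).
Proof. by move=> vp vq i iN; rewrite coefD vp ?vq ?addr0. Qed.

Lemma vanishes_toMl N p q : vanishes_to N q -> vanishes_to N (p * q).
Proof.
move=> vq i iN; rewrite coefM big1 // => j _.
by rewrite vq ?mulr0 // (leq_trans (leq_subr _ _) iN).
Qed.

Lemma cubic_series_eq N t (A B S : {poly R}) :
    vanishes_to N (A - ('X + t%:P * (B * S))) ->
    vanishes_to N (B - ('X + A * S)) ->
    vanishes_to N (S - (A + B - 'X)) ->
  vanishes_to N (S - ('X + (1 + t%:P) * ('X * S) + t%:P * ('X * S ^+ 2) + t%:P * S ^+ 3)).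
Proof.
move=> dA dB dS.
(* The multipliers eliminate [A] and [B] from the three relations. *)
have -> : S - ('X + (1 + t%:P) * ('X * S) + t%:P * ('X * S ^+ 2) + t%:P * S ^+ 3) =
    (1 + S) * (A - ('X + t%:P * (B * S))) + (1 + t%:P * S) * (B - ('X + A * S)) +
    (1 - t%:P * S ^+ 2) * (S - (A + B - 'X)) by ring.
by apply: vanishes_toD; [apply: vanishes_toD|]; apply: vanishes_toMl.
Qed.

End TruncatedSeries.

Notation Sdes_sum_indec := (Sdes (predC sum_decomposable)).
Notation Sdes_skew_indec := (Sdes (predC skew_decomposable)).

Lemma eq_Sdes k (P Q : pred (seq nat)) : {in sep_perms k, P =1 Q} -> Sdes P k = Sdes Q k.
Proof.
move=> PQ; rewrite /Sdes big_seq_cond [RHS]big_seq_cond; apply: eq_bigl => l.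
by case: (boolP (l \in _)) => // /PQ ->.
Qed.

Lemma Sdes1 (P : pred (seq nat)) : P [:: 0%N] -> Sdes P 1 = 1.
Proof. by move=> P0; rewrite /Sdes (perm_big _ sep_perms1) big_cons big_nil P0 /= addr0 expr0. Qed.

Lemma Sdes_sum_indecE k : (1 < k)%N -> Sdes_sum_indec k = Sdes skew_decomposable k.
Proof. by move=> k1; apply: eq_Sdes => l lW /=; rewrite (skew_decomposableE lW k1). Qed.

Lemma Sdes_skew_indecE k : (1 < k)%N -> Sdes_skew_indec k = Sdes sum_decomposable k.
Proof. by move=> k1; apply: eq_Sdes => l lW /=; rewrite (skew_decomposableE lW k1) negbK. Qed.

Lemma Spoly_indec_split k : (1 < k)%N -> Spoly k = Sdes_sum_indec k + Sdes_skew_indec k.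
Proof.
by move=> k1; rewrite Sdes_skew_indecE // Spoly_Sdes /Sdes (bigID sum_decomposable) addrC.
Qed.

Lemma Sdes_sum_decomposable n :
  Sdes sum_decomposable n = \sum_(1 <= k < n) Sdes_sum_indec k * Spoly (n - k).
Proof.
rewrite /Sdes big_sum_decomposable; apply: eq_bigr => k _.
rewrite Spoly_Sdes big_distrl /= big_seq_cond [RHS]big_seq_cond.
apply: eq_bigr => s /andP[sW _]; rewrite big_distrr /=; apply: eq_bigr => t _.
by rewrite descents_direct_sum // exprD.
Qed.

Lemma Sdes_skew_decomposable n :
  Sdes skew_decomposable n = \sum_(1 <= k < n) 'X * (Sdes_skew_indec k * Spoly (n - k)).
Proof.
rewrite /Sdes big_skew_decomposable big_nat [RHS]big_nat.
apply: eq_bigr => k /andP[k0 kn]; rewrite Spoly_Sdes big_distrl mulr_sumr /=.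
rewrite big_seq_cond [RHS]big_seq_cond; apply: eq_bigr => s /andP[sW _].
rewrite big_distrr mulr_sumr /= big_seq [RHS]big_seq; apply: eq_bigr => t tW.
have [szs _ _ _] := sep_permsP sW; have [szt _ _ _] := sep_permsP tW.
rewrite descents_skew_sum ?exprS ?exprD //.
- by rewrite -size_eq0 szs -lt0n.
- by rewrite -size_eq0 szt -lt0n subn_gt0.
Qed.

Lemma vanishes_sum_indec N :
  vanishes_to N
    (series Sdes_sum_indec N - ('X + 'X%:P * (series Sdes_skew_indec N * series Spoly N))).
Proof.
move=> i iN; rewrite coefB coefD coefX coefCM coef_series_mul // coef_series //.
case: i iN => [|[|i]] iN /=.
- by rewrite big_geq // mulr0 addr0 subr0.
- by rewrite big_geq // mulr0 addr0 Sdes1 // subrr.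
by rewrite add0r Sdes_sum_indecE // Sdes_skew_decomposable mulr_sumr subrr.
Qed.

Lemma vanishes_skew_indec N :
  vanishes_to N (series Sdes_skew_indec N - ('X + series Sdes_sum_indec N * series Spoly N)).
Proof.
move=> i iN; rewrite coefB coefD coefX coef_series_mul // coef_series //.
case: i iN => [|[|i]] iN /=.
- by rewrite big_geq // addr0 subr0.
- by rewrite big_geq // addr0 Sdes1 // subrr.
by rewrite add0r Sdes_skew_indecE // Sdes_sum_decomposable subrr.
Qed.

Lemma vanishes_Spoly N :
  vanishes_to N (series Spoly N - (series Sdes_sum_indec N + series Sdes_skew_indec N - 'X)).
Proof.
move=> i iN; rewrite !coefB coefD coefX !coef_series //.
case: i iN => [|[|i]] iN /=.
- by rewrite !(subr0, addr0).
- by rewrite Spoly_Sdes !Sdes1 // addrK subrr.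
by rewrite subr0 Spoly_indec_split // subrr.
Qed.

Definition Sconv m : {poly int} := \sum_(1 <= i < m) Spoly i * Spoly (m - i).

Lemma Spoly_recurrence n : (2 <= n)%N ->
  Spoly n = (1 + 'X) * Spoly n.-1 + 'X * Sconv n.-1 +
            'X * \sum_(1 <= j < n) Spoly j * Sconv (n - j).
Proof.
move=> n2; set S := series Spoly n.
have := cubic_series_eq (@vanishes_sum_indec n) (@vanishes_skew_indec n) (@vanishes_Spoly n).
move=> /(_ n (leqnn n)).
have S2E m : (m <= n)%N -> (S ^+ 2)`_m = Sconv m by move=> mn; rewrite expr2 coef_series_mul.
have S3E : (S ^+ 3)`_n = \sum_(1 <= j < n) Spoly j * Sconv (n - j).
  rewrite exprS coef_seriesM //; last by rewrite S2E // /Sconv big_geq.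
  by apply: eq_big_nat => j _; rewrite S2E ?leq_subr.
have SE i : (0 < i <= n)%N -> S`_i = Spoly i.
  by case: i => [|i] // /andP[_ iN]; rewrite coef_series.
have [Sn Sn1] : S`_n = Spoly n /\ S`_n.-1 = Spoly n.-1 by split; apply: SE; lia.
have [n0 n1] : n != 0%N /\ n != 1%N by split; apply/eqP; lia.
rewrite !coefB !coefD coefX mulrDl mul1r coefD !coefCM !coefXM S3E S2E ?leq_pred //.
rewrite (negbTE n0) (negbTE n1) Sn Sn1.
by move/eqP; rewrite subr_eq0 => /eqP ->; rewrite mulr0n add0r; ring.
Qed.

Theorem theorem5p10 (n : nat) : (2 <= n)%N ->
  Spoly n =
    ((1 + 'X) * Spoly n.-1 +
     'X * \sum_(1 <= j < n.-1)
            Spoly j * (Spoly (n - j).-1 +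
                       \sum_(1 <= i < n - j) Spoly i * Spoly (n - j - i)))%R.
Proof.
case: n => [|[|m]] // _; rewrite Spoly_recurrence // -addrA -mulrDr /=.
congr (_ + 'X * _)%R; under [RHS]eq_bigr do rewrite mulrDr.
rewrite big_split /=; congr (_ + _)%R.
  by apply: eq_big_nat => j /andP[_ jm]; rewrite (subSn (ltnW jm)).
by rewrite big_nat_recr //= subSnn [Sconv 1]big_geq // mulr0 addr0.
Qed.
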